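(* There exist infinitely many positive odd integers $n$ with the property that there exist positive integers $d_1, d_2$, each dividing $\frac{n^2+1}{2}$, such that $d_1+d_2=2n$. Moreover, any such pair satisfies $\gcd(d_1,d_2)=1$ and $d_1d_2=\frac{n^2+1}{2}$. *)

From mathcomp Require Import all_boot.
(* n is odd, so n^2+1 is even and (n^2+1)/2 = (n^2+1) %/ 2 exactly. *)
Definition half_sq1 (n : nat) : nat := (n ^ 2 + 1) %/ 2.

Definition good_pair (n d1 d2 : nat) : Prop :=
  0 < d1 /\ 0 < d2 /\ d1 %| half_sq1 n /\ d2 %| half_sq1 n /\ d1 + d2 = 2 * n.

(* Solutions of the Pell equation n^2 - 2k^2 = 1 give infinitely many odd n with
   d1 = n + k and d2 = n - k, since d1 d2 = n^2 - k^2 = k^2 + 1 = (n^2 + 1)/2.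
   Conversely, a common divisor of d1 and d2 divides 2n and the odd number
   (n^2 + 1)/2, hence is 1; so d1 d2 divides (n^2 + 1)/2 = t d1 d2, and expanding
   (d1 + d2)^2 = 4n^2 gives d1^2 + d2^2 + 4 = (8t - 2) d1 d2.  Vieta jumping shows
   that x^2 + y^2 + 4 = kxy has positive solutions only for k = 3 and k = 6,
   which forces t = 1. *)

From mathcomp Require Import all_boot.
From mathcomp Require Import zify.

Set Implicit Arguments.
Unset Strict Implicit.

Lemma vieta_sum_sq_add4_small x y k : 0 < x -> 0 < y -> y <= 2 ->
  x * x + y * y + 4 = k * x * y -> k = 3 \/ k = 6.
Proof.
move=> x_gt0 y_gt0 y_le2 E.
have [y1|y2] : y = 1 \/ y = 2 by lia.
- have : x %| 5 by apply/dvdnP; exists (k - x); subst y; nia.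
  by rewrite dvdn_divisors // !inE => /orP[] /eqP x_eq; subst x y; nia.
- have : x %| 8 by apply/dvdnP; exists (2 * k - x); subst y; nia.
  by rewrite dvdn_divisors // !inE => /or4P[] /eqP x_eq; subst x y; nia.
Qed.

Lemma vieta_sum_sq_add4 x y k : 0 < x -> 0 < y ->
  x * x + y * y + 4 = k * x * y -> k = 3 \/ k = 6.
Proof.
move: {2}(x + y) (leqnn (x + y)) => s; elim: s x y => [|s IH] x y le_xy_s x_gt0 y_gt0 E.
  lia.
wlog le_yx : x y le_xy_s x_gt0 y_gt0 E / y <= x.
  move=> W; case: (leqP y x) => [|/ltnW]; first exact: W.
  by apply: W; lia.
case: (ltnP y 3) => [y_lt3|y_ge3]; first by apply: (vieta_sum_sq_add4_small x_gt0 y_gt0 _ E); lia.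
have lt_yx : y < x by case: (eqVneq x y) => [xy|]; [subst x; case: (leqP k 2) => ?; nia | lia].
(* The other root x' = k y - x = (y^2 + 4)/x of the quadratic in x is smaller. *)
have [x' def_x'] : exists x', x' + x = k * y by exists (k * y - x); nia.
have E' : x' * x = y * y + 4 by nia.
by apply: (IH x' y) => //; nia.
Qed.

Lemma pell_unbounded N : exists n k, N < n /\ n * n = 2 * (k * k) + 1.
Proof.
elim: N => [|N [n [k [lt_Nn E]]]]; first by exists 3, 2.
(* Multiplication by the fundamental unit 3 + 2 sqrt 2. *)
by exists (3 * n + 4 * k), (2 * n + 3 * k); split; nia.
Qed.

Lemma half_sq1_odd n : odd n -> half_sq1 n * 2 = n * n + 1 /\ odd (half_sq1 n).
Proof.
move=> odd_n; have def_n : n = (n./2).*2 + 1 by rewrite -{1}(odd_double_half n) odd_n addnC.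
rewrite /half_sq1 def_n; set m := n./2.
have -> : ((m.*2 + 1) ^ 2 + 1) = (2 * (m * m + m) + 1) * 2.
  by rewrite -muln2 expnS expn1; nia.
by rewrite mulnK // addn1 /= oddM.
Qed.

Lemma good_pair_pell n k : n * n = 2 * (k * k) + 1 -> good_pair n (n + k) (n - k).
Proof.
move=> E; have lt_kn : k < n by nia.
rewrite /good_pair.
have -> : half_sq1 n = (n + k) * (n - k).
  rewrite /half_sq1; have -> : n ^ 2 + 1 = (k * k + 1) * 2 by rewrite expnS expn1; lia.
  by rewrite mulnK //; nia.
by do !split; [lia | lia | exact: dvdn_mulr | exact: dvdn_mull | lia].
Qed.

Lemma good_pair_coprime n d1 d2 : odd n -> good_pair n d1 d2 -> gcdn d1 d2 = 1.
Proof.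
move=> odd_n [_ [_ [d1_h [d2_h sum_d]]]]; have [h2 odd_h] := half_sq1_odd odd_n.
set g := gcdn d1 d2.
have g_h : g %| half_sq1 n by apply: dvdn_trans d1_h; apply: dvdn_gcdl.
have g_2n : g %| 2 * n by rewrite -sum_d dvdn_add ?dvdn_gcdl ?dvdn_gcdr.
have g_2 : g %| 2.
  have g_2nn : g %| 2 * n * n by apply: dvdn_mulr.
  have : g %| half_sq1 n * 2 * 2 by rewrite dvdn_mulr ?dvdn_mulr.
  by rewrite h2 (_ : (n * n + 1) * 2 = 2 * n * n + 2) ?(dvdn_addr _ g_2nn) //; lia.
move: g_2; rewrite dvdn_divisors // !inE => /orP[] /eqP // g_eq2.
by move: g_h; rewrite g_eq2 dvdn2 odd_h.
Qed.

Lemma good_pair_mul n d1 d2 : odd n -> good_pair n d1 d2 -> d1 * d2 = half_sq1 n.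
Proof.
move=> odd_n pair_d; have [d1_gt0 [d2_gt0 [d1_h [d2_h sum_d]]]] := pair_d.
have [h2 _] := half_sq1_odd odd_n.
have : d1 * d2 %| half_sq1 n.
  by rewrite -(muln_lcm_gcd d1 d2) (good_pair_coprime odd_n pair_d) muln1 dvdn_lcm d1_h d2_h.
case/dvdnP=> t def_h; rewrite def_h in h2 *.
have sq_sum : d1 * d1 + d2 * d2 + 2 * (d1 * d2) = 4 * (n * n).
  by have /= := congr1 (fun m => m * m) sum_d; nia.
have E : d1 * d1 + d2 * d2 + 4 = (8 * t - 2) * d1 * d2.
  rewrite -mulnA mulnBl -mulnA; move: sq_sum h2.
  by generalize (t * (d1 * d2)) (d1 * d2) (n * n) (d1 * d1) (d2 * d2); lia.
have [k3|k6] := vieta_sum_sq_add4 d1_gt0 d2_gt0 E; first lia.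
have -> : t = 1 by lia.
by rewrite mul1n.
Qed.

Theorem proposition1 :
  (forall N : nat, exists n : nat,
      N < n /\ odd n /\ exists d1 d2 : nat, good_pair n d1 d2) /\
  (forall n d1 d2 : nat, 0 < n -> odd n -> good_pair n d1 d2 ->
      gcdn d1 d2 = 1 /\ d1 * d2 = half_sq1 n).
Proof.
split.
  move=> N; have [n [k [lt_Nn E]]] := pell_unbounded N.
  exists n; split=> //; split; last by exists (n + k), (n - k); apply: good_pair_pell.
  by have := congr1 odd E; rewrite oddM andbb addn1 /= oddM => ->.
move=> n d1 d2 _ odd_n pair_d.
by split; [apply: good_pair_coprime pair_d | apply: good_pair_mul].
Qed.
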